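(* For all real $x\ge4$, $H(x)\log(H(x))<\dfrac{x^2}{x+\frac{6}{\pi^2}}$.
   Context: $H(x)=\int_0^1\frac{t^x-1}{t-1}\,dt$ for real $x\ge1$; it satisfies $H(n)=1+\frac12+\cdots+\frac1n$ for $n\in\mathbb{N}$ and $H(x)=\psi(x+1)+\gamma$ with $\psi=\Gamma'/\Gamma$ the digamma function. *)

From Stdlib Require Import Reals.
From Coquelicot Require Import Coquelicot.
Open Scope R_scope.

(* H(x) = \int_0^1 (t^x - 1)/(t - 1) dt, with t^x the real power
   (Rpower t x = exp (x * ln t)); the integrand's values at the two
   endpoints t = 0 and t = 1 do not affect the Riemann integral. *)
Definition H (x : R) : R :=
  RInt (fun t => (Rpower t x - 1) / (t - 1)) 0 1.

From Stdlib Require Import Reals Lra.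
From Coquelicot Require Import Coquelicot.
Open Scope R_scope.

(* Splitting the integral at b = 1 - 1/x, the integrand is at most 1/(1-t)
   on [0, b] and at most x/t <= x/b on [b, 1], whence H(x) <= ln x + x/(x-1),
   which is <= ln x + 4/3 for x >= 4.  Since y ln y <= y^2/e, it remains to
   check (ln x + 4/3)^2 / e < x - 2/3 < x^2/(x + 6/pi^2); the first inequality
   follows from ln x <= 2 sqrt x / e and e > 2.63, the second from
   6/pi^2 < 2/3. *)

Definition H_integrand (x t : R) : R := (Rpower t x - 1) / (t - 1).

Lemma Rpower_continuity_pt (x z : R) :
  0 < z -> continuity_pt (fun t => Rpower t x) z.
Proof.
  intros hz. apply derivable_continuous_pt.
  exists (x * Rpower z (x - 1)). now apply derivable_pt_lim_power.
Qed.

Lemma Rpower_base_1 (y : R) : Rpower 1 y = 1.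
Proof. unfold Rpower. now rewrite ln_1, Rmult_0_r, exp_0. Qed.

Lemma Rpower_le_base (x t : R) : 1 <= x -> 0 < t <= 1 -> 0 < Rpower t x <= t.
Proof.
  intros hx ht. split; [apply exp_pos|].
  replace x with (1 + (x - 1)) by ring.
  rewrite Rpower_plus, Rpower_1 by lra.
  assert (hpow : Rpower t (x - 1) <= 1).
  { apply Rle_trans with (Rpower 1 (x - 1)); [apply Rle_Rpower_l; lra|].
    now rewrite Rpower_base_1. }
  assert (0 < Rpower t (x - 1)) by apply exp_pos.
  nra.
Qed.

(* [Rpower 0 x = exp (x * ln 0) = 1] since [ln 0 = 0]; this variant of [t^x]
   is right-continuous at 0. *)
Definition Rpower_pos (x t : R) : R := if Rlt_dec 0 t then Rpower t x else 0.

Definition H_integrand_ext (x t : R) : R :=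
  if Req_EM_T t 1 then x else (Rpower_pos x t - 1) / (t - 1).

Lemma Rpower_pos_continuity_pt (x z : R) :
  1 <= x -> 0 <= z -> continuity_pt (Rpower_pos x) z.
Proof.
  intros hx hz. destruct (Req_dec z 0) as [->|hz0].
  - intros eps heps. exists (Rmin eps 1). split; [apply Rmin_pos; lra|].
    intros t [_ ht]. simpl in *. unfold R_dist in *.
    rewrite Rminus_0_r in ht.
    assert (ht1 : Rabs t < eps) by (eapply Rlt_le_trans; [exact ht | apply Rmin_l]).
    assert (ht2 : Rabs t < 1) by (eapply Rlt_le_trans; [exact ht | apply Rmin_r]).
    unfold Rpower_pos. destruct (Rlt_dec 0 0); [lra|].
    destruct (Rlt_dec 0 t) as [htpos|]; rewrite Rminus_0_r.
    + rewrite Rabs_right in ht1, ht2 by lra.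
      destruct (Rpower_le_base x t hx (conj htpos (Rlt_le _ _ ht2))).
      rewrite Rabs_right; lra.
    + rewrite Rabs_R0. lra.
  - apply (continuity_pt_locally_ext (fun t => Rpower t x) _ z z); [lra| |].
    + intros y hy. unfold Rdist in hy. apply Rabs_def2 in hy.
      unfold Rpower_pos. destruct (Rlt_dec 0 y); [reflexivity | lra].
    + apply Rpower_continuity_pt. lra.
Qed.

(* At [t = 1] the integrand is the difference quotient of [t^x], whose
   limit is the derivative [x]. *)
Lemma H_integrand_ext_continuity_pt_1 (x : R) :
  continuity_pt (H_integrand_ext x) 1.
Proof.
  intros eps heps.
  destruct (derivable_pt_lim_power 1 x Rlt_0_1 eps heps) as [d hd].
  exists (Rmin d 1). split; [apply Rmin_pos; [apply cond_pos | lra]|].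
  intros t [_ ht]. simpl in *. unfold R_dist in *.
  assert (htd : Rabs (t - 1) < d) by (eapply Rlt_le_trans; [exact ht | apply Rmin_l]).
  assert (htpos : 0 < t).
  { assert (ht1 : Rabs (t - 1) < 1)
      by (eapply Rlt_le_trans; [exact ht | apply Rmin_r]).
    apply Rabs_def2 in ht1. lra. }
  unfold H_integrand_ext, Rpower_pos.
  destruct (Req_EM_T 1 1) as [_|]; [|lra].
  destruct (Req_EM_T t 1) as [->|ht1]; [rewrite Rminus_diag, Rabs_R0; lra|].
  destruct (Rlt_dec 0 t) as [_|]; [|lra].
  assert (hq := hd (t - 1) ltac:(lra) htd).
  replace (1 + (t - 1)) with t in hq by ring.
  now rewrite !Rpower_base_1, Rmult_1_r in hq.
Qed.

Lemma H_integrand_ext_continuity_pt (x z : R) :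
  1 <= x -> 0 <= z <= 1 -> continuity_pt (H_integrand_ext x) z.
Proof.
  intros hx hz. destruct (Req_dec z 1) as [->|hz1].
  { apply H_integrand_ext_continuity_pt_1. }
  apply (continuity_pt_locally_ext (fun t => (Rpower_pos x t - 1) / (t - 1))
           _ (1 - z) z); [lra| |].
  - intros y hy. unfold Rdist in hy. apply Rabs_def2 in hy.
    unfold H_integrand_ext. destruct (Req_EM_T y 1); [lra | reflexivity].
  - apply (continuity_pt_div (fun t => Rpower_pos x t - 1) (fun t => t - 1));
      [| |lra].
    + apply (continuity_pt_minus _ (fun _ => 1)).
      * apply Rpower_pos_continuity_pt; lra.
      * apply continuity_pt_const. now intros a b.
    + apply (continuity_pt_minus (fun t => t) (fun _ => 1)).
      * apply derivable_continuous_pt, derivable_pt_id.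
      * apply continuity_pt_const. now intros a b.
Qed.

Lemma ex_RInt_H_integrand (x : R) : 1 <= x -> ex_RInt (H_integrand x) 0 1.
Proof.
  intros hx. apply (ex_RInt_ext (H_integrand_ext x)).
  - intros t ht. rewrite Rmin_left, Rmax_right in ht by lra.
    unfold H_integrand_ext, Rpower_pos, H_integrand.
    destruct (Req_EM_T t 1); [lra|]. destruct (Rlt_dec 0 t); [reflexivity | lra].
  - apply (@ex_RInt_continuous R_CompleteNormedModule).
    intros z hz. rewrite Rmin_left, Rmax_right in hz by lra.
    apply continuity_pt_filterlim. now apply H_integrand_ext_continuity_pt.
Qed.

Lemma H_integrand_le_inv (x t : R) :
  1 <= x -> 0 < t < 1 -> H_integrand x t <= / (1 - t).
Proof.
  intros hx ht. destruct (Rpower_le_base x t hx ltac:(lra)).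
  unfold H_integrand.
  replace ((Rpower t x - 1) / (t - 1)) with ((1 - Rpower t x) * / (1 - t))
    by (field; lra).
  rewrite <- (Rmult_1_l (/ (1 - t))) at 2.
  apply Rmult_le_compat_r; [apply Rlt_le, Rinv_0_lt_compat|]; lra.
Qed.

(* Convexity: [t^x >= 1 + x ln t >= 1 + x (1 - 1/t)]. *)
Lemma H_integrand_le_div (x t : R) :
  0 <= x -> 0 < t < 1 -> H_integrand x t <= x / t.
Proof.
  intros hx ht. unfold H_integrand.
  assert (hln : 1 - / t <= ln t).
  { assert (h := exp_ineq1_le (ln (/ t))).
    rewrite exp_ln, ln_Rinv in h by (try apply Rinv_0_lt_compat; lra). lra. }
  assert (hpow : 1 + x * ln t <= Rpower t x).
  { unfold Rpower. rewrite Rmult_comm. apply exp_ineq1_le. }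
  assert (x * (1 - / t) <= x * ln t) by (apply Rmult_le_compat_l; lra).
  replace ((Rpower t x - 1) / (t - 1)) with ((1 - Rpower t x) * / (1 - t))
    by (field; lra).
  replace (x / t) with ((x * (/ t - 1)) * / (1 - t)) by (field; lra).
  apply Rmult_le_compat_r; [apply Rlt_le, Rinv_0_lt_compat|]; lra.
Qed.

Lemma is_RInt_inv_1_sub (b : R) :
  0 <= b < 1 -> is_RInt (fun t => / (1 - t)) 0 b (- ln (1 - b)).
Proof.
  intros hb.
  replace (- ln (1 - b)) with (minus (- ln (1 - b)) (- ln (1 - 0))).
  2: { rewrite Rminus_0_r, ln_1. unfold minus, plus, opp; simpl. ring. }
  apply (is_RInt_derive (fun t => - ln (1 - t))).
  - intros t ht. rewrite Rmin_left, Rmax_right in ht by lra.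
    auto_derive; [lra | field; lra].
  - intros t ht. rewrite Rmin_left, Rmax_right in ht by lra.
    apply continuity_pt_filterlim, (continuity_pt_inv (fun t => 1 - t)); [|lra].
    apply (continuity_pt_minus (fun _ => 1) (fun t => t)).
    + apply continuity_pt_const. now intros a c.
    + apply derivable_continuous_pt, derivable_pt_id.
Qed.

Lemma H_le (x : R) : 1 < x -> H x <= ln x + x / (x - 1).
Proof.
  intros hx. set (b := 1 - / x).
  assert (hinv : 0 < / x < 1).
  { split; [apply Rinv_0_lt_compat; lra|].
    rewrite <- Rinv_1. apply Rinv_lt_contravar; lra. }
  assert (hb : 0 < b < 1) by (unfold b; lra).
  assert (hint := ex_RInt_H_integrand x ltac:(lra)).
  assert (h0b : ex_RInt (H_integrand x) 0 b)
    by (apply (@ex_RInt_Chasles_1 R_CompleteNormedModule _ _ _ 1); [lra | exact hint]).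
  assert (hb1 : ex_RInt (H_integrand x) b 1)
    by (apply (@ex_RInt_Chasles_2 R_CompleteNormedModule _ 0); [lra | exact hint]).
  change (RInt (H_integrand x) 0 1 <= ln x + x / (x - 1)).
  rewrite <- (@RInt_Chasles R_CompleteNormedModule _ 0 b 1 h0b hb1).
  change (plus ?u ?v) with (u + v).
  assert (hleft : RInt (H_integrand x) 0 b <= ln x).
  { assert (hi := is_RInt_inv_1_sub b ltac:(lra)).
    replace (ln x) with (- ln (1 - b))
      by (unfold b; replace (1 - (1 - / x)) with (/ x) by ring;
          rewrite ln_Rinv; lra).
    rewrite <- (is_RInt_unique _ _ _ _ hi).
    apply RInt_le; [lra | exact h0b | now exists (- ln (1 - b)) |].
    intros t ht. apply H_integrand_le_inv; lra. }
  assert (hright : RInt (H_integrand x) b 1 <= x / (x - 1)).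
  { apply Rle_trans with (RInt (fun _ => x / b) b 1).
    - apply RInt_le; [lra | exact hb1 | apply ex_RInt_const |].
      intros t ht. apply Rle_trans with (x / t); [apply H_integrand_le_div; lra|].
      apply Rmult_le_compat_l; [lra|]. apply Rinv_le_contravar; lra.
    - rewrite RInt_const. unfold scal; simpl. unfold mult; simpl.
      unfold b. right. field. lra. }
  lra.
Qed.

Lemma exp_mult_INR (n : nat) (a : R) : exp (INR n * a) = exp a ^ n.
Proof.
  rewrite <- Rpower_pow by apply exp_pos. unfold Rpower.
  now rewrite ln_exp.
Qed.

Lemma exp_1_gt : 263 / 100 < exp 1.
Proof.
  assert (h := exp_ineq1_le (1 / 16)).
  replace (exp 1) with (exp (INR 16 * (1 / 16))) by (f_equal; simpl; field).
  rewrite exp_mult_INR.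
  apply Rlt_le_trans with ((1 + 1 / 16) ^ 16); [simpl; lra|].
  apply pow_incr. lra.
Qed.

Lemma ln_le_div_exp_1 (y : R) : 0 < y -> ln y <= y / exp 1.
Proof.
  intros hy. assert (h := exp_ineq1_le (ln y - 1)).
  unfold Rminus in h. rewrite exp_plus, exp_ln, exp_Ropp in h by lra. lra.
Qed.

Lemma ln_le_sqrt (x : R) : 0 < x -> ln x <= 2 * sqrt x / exp 1.
Proof.
  intros hx. assert (hs : 0 < sqrt x) by now apply sqrt_lt_R0.
  rewrite <- (sqrt_sqrt x) at 1 by lra. rewrite ln_mult by lra.
  assert (h := ln_le_div_exp_1 (sqrt x) hs). lra.
Qed.

(* For [y <= 0] the left-hand side vanishes, as [ln] is [0] there. *)
Lemma mul_ln_le_sqr_div_exp_1 (y L : R) :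
  y <= L -> y * ln y <= L ^ 2 / exp 1.
Proof.
  intros hyL. assert (he := exp_pos 1).
  assert (0 <= L ^ 2 / exp 1)
    by (apply Rle_mult_inv_pos; [apply pow2_ge_0 | exact he]).
  destruct (Rlt_dec 0 y) as [hy|hy].
  - assert (h := ln_le_div_exp_1 y hy).
    apply Rle_trans with (y * (y / exp 1)); [now apply Rmult_le_compat_l; lra|].
    unfold Rdiv. rewrite <- Rmult_assoc. apply Rmult_le_compat_r;
      [apply Rlt_le, Rinv_0_lt_compat, he|].
    simpl. nra.
  - unfold ln. destruct (Rlt_dec 0 y); [contradiction|]. lra.
Qed.

Lemma sqr_ln_add_div_exp_1_lt (x : R) :
  4 <= x -> (ln x + 4 / 3) ^ 2 / exp 1 < x - 2 / 3.
Proof.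
  intros hx. set (k := / exp 1). set (s := sqrt x).
  assert (hk : 0 < k <= 100 / 263).
  { assert (he := exp_1_gt). split; [apply Rinv_0_lt_compat; lra|].
    replace (100 / 263) with (/ (263 / 100)) by field.
    apply Rinv_le_contravar; lra. }
  assert (hs : s * s = x) by (apply sqrt_sqrt; lra).
  assert (hs2 : 2 <= s).
  { unfold s. rewrite <- sqrt_square with 2 by lra.
    apply sqrt_le_1_alt. lra. }
  assert (hln0 : 0 < ln x) by (rewrite <- ln_1; apply ln_increasing; lra).
  assert (hln : ln x <= 2 * k * s)
    by (assert (h := ln_le_sqrt x ltac:(lra)); unfold k, s, Rdiv in *; lra).
  assert (hsq : (ln x + 4 / 3) ^ 2 <= (4 / 3 + 2 * k * s) ^ 2)
    by (apply pow_incr; lra).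
  assert (hkk : k * (4 / 3 + 2 * k * s) ^ 2 <= 100 / 263 * (4 / 3 + 2 * 100 / 263 * s) ^ 2)
    by (apply Rmult_le_compat; [lra | apply pow2_ge_0 | lra | apply pow_incr; nra]).
  assert (hpoly : 100 / 263 * (4 / 3 + 2 * 100 / 263 * s) ^ 2 < s * s - 2 / 3)
    by (assert (0 <= (s - 2) * (s - 2)) by nra; nra).
  assert (k * (ln x + 4 / 3) ^ 2 <= k * (4 / 3 + 2 * k * s) ^ 2)
    by (apply Rmult_le_compat_l; lra).
  unfold Rdiv at 1. fold k. lra.
Qed.

Lemma sub_lt_sqr_div_add (x c : R) :
  0 < x -> 0 <= c < 2 / 3 -> x - 2 / 3 < x ^ 2 / (x + c).
Proof.
  intros hx hc. apply Rmult_lt_reg_r with (x + c); [lra|].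
  unfold Rdiv. rewrite Rmult_assoc, Rinv_l by lra. nra.
Qed.

Lemma six_div_PI2_bounds : 0 <= 6 / PI ^ 2 < 2 / 3.
Proof.
  assert (hpi : 3 < PI) by (assert (h := PI2_3_2); lra).
  assert (hpi2 : 9 < PI ^ 2) by nra.
  split.
  - apply Rle_mult_inv_pos; lra.
  - apply Rmult_lt_reg_r with (PI ^ 2); [lra|].
    unfold Rdiv. rewrite Rmult_assoc, Rinv_l by lra. lra.
Qed.

Theorem mainTheorem15 (x : R) (hx : 4 <= x) :
  H x * ln (H x) < x ^ 2 / (x + 6 / PI ^ 2).
Proof.
  assert (hH : H x <= ln x + 4 / 3).
  { apply Rle_trans with (ln x + x / (x - 1)); [apply H_le; lra|].
    apply Rplus_le_compat_l. apply Rmult_le_reg_r with (x - 1); [lra|].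
    unfold Rdiv. rewrite Rmult_assoc, Rinv_l by lra. lra. }
  apply Rle_lt_trans with ((ln x + 4 / 3) ^ 2 / exp 1).
  { now apply mul_ln_le_sqr_div_exp_1. }
  apply Rlt_trans with (x - 2 / 3).
  - now apply sqr_ln_add_div_exp_1_lt.
  - apply sub_lt_sqr_div_add; [lra | apply six_div_PI2_bounds].
Qed.
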